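(* Let $d\ge 2$ and let the weights $(J_y)_{y\in\Sigma_n}$ on $\mathbb T_n^d$ be i.i.d. with a good distribution and $\mathbb E|J_y|^{4+\delta}<\infty$ for some $\delta>0$. Let $x\in\Sigma_n$ and let $J'_x$ be an independent copy of $J_x$, independent of all the weights. Then there is $c_1>0$, not depending on $n$, such that $\mathbb P(\max\{J_x,J'_x\}<K_{n,x})>c_1$ for all $n\ge3$.
   Context: $\mathbb T_n^d=(\mathbb Z/n\mathbb Z)^d$ with nearest-neighbour edges; $\Sigma_n$ is its set of vertices and edges. A matching is a set $M\subset\Sigma_n$ such that every vertex either belongs to $M$ or is an endpoint of exactly one edge of $M$, but not both; $H(M)=\sum_{y\in M}J_y$. $M_{n,x,1}$ (resp. $M_{n,x,0}$) is the minimal-weight matching among those containing $x$ (resp. not containing $x$), and the transition point is $K_{n,x}=H(M_{n,x,0})-H(M_{n,x,1})+J_x$ (a function of $(J_y)_{y\ne x}$). A good distribution: values in $[\beta,\infty)$, $\beta\in\{-\infty\}\cup\mathbb R$, continuous density $p$ with $p>0$ on $(\beta,\infty)$, and for some $\alpha>1$, $\int_\beta^\infty(p(x-z)/p(x))^\alpha p(x)\,dx$ finite and continuous in $z>0$. *)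

From HB Require Import structures.
From mathcomp Require Import all_boot all_order all_algebra.
From mathcomp Require Import all_classical all_reals all_analysis.
Set Implicit Arguments. Unset Strict Implicit. Unset Printing Implicit Defensive.
Import Order.TTheory GRing.Theory Num.Theory.
Import numFieldNormedType.Exports.
Local Open Scope classical_set_scope.
Local Open Scope ring_scope.

Section Torus.
Variables (n d : nat).

Definition vtx := {ffun 'I_d -> 'I_n}.

Definition adjb (u v : vtx) : bool :=
  [exists i : 'I_d,
     ((val (v i) == (val (u i)).+1 %% n)%N || (val (u i) == (val (v i)).+1 %% n)%N)
     && [forall j : 'I_d, (j != i) ==> (u j == v j)]].

(* an element of Sigma_n: a vertex {v} or an edge {u,v} *)
Definition site_or_edge (A : {set vtx}) : bool :=
  (#|A| == 1)%N ||
  [exists u : vtx, exists v : vtx, (A == [set u; v]%SET) && adjb u v].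

Definition Sigma := {A : {set vtx} | site_or_edge A}.

Definition is_matching (M : {set Sigma}) : bool :=
  [forall v : vtx, #|[set y in M | v \in val y]%SET| == 1%N].

Variable R : realType.

Definition Hw (w : Sigma -> R) (M : {set Sigma}) : R := \sum_(y in M) w y.

Definition minH (x : Sigma) (b : bool) (w : Sigma -> R) : R :=
  fine (\big[Order.min/+oo%E]_(M : {set Sigma} | is_matching M && ((x \in M) == b))
          (Hw w M)%:E).

Definition Ktrans (x : Sigma) (w : Sigma -> R) : R :=
  minH x false w - minH x true w + w x.

End Torus.

Definition good_density (R : realType) (beta : \bar R) (alpha : R) (p : R -> R) : Prop :=
  beta != +oo%E /\
  (forall x, 0 <= p x) /\
  (forall x, (x%:E < beta)%E -> p x = 0) /\
  (forall x, (beta < x%:E)%E -> 0 < p x) /\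
  {within [set x : R | (beta < x%:E)%E], continuous p} /\
  1 < alpha /\
  let F := fun z : R =>
    (\int[@lebesgue_measure R]_(x in [set x : R | (beta < x%:E)%E])
        ((p (x - z) / p x) `^ alpha * p x)%:E)%E in
  (forall z : R, 0 < z -> (F z < +oo)%E) /\
  {within [set z : R | 0 < z], continuous (fun z => fine (F z))}.

Definition has_density (R : realType) (dT : measure_display) (T : measurableType dT)
  (P : probability T R) (X : T -> R) (p : R -> R) : Prop :=
  forall B : set R, measurable B ->
    P (X @^-1` B) = (\int[@lebesgue_measure R]_(x in B) (p x)%:E)%E.

Definition mutually_independent (R : realType) (dT : measure_display) (T : measurableType dT)
  (P : probability T R) (I : finType) (X : I -> T -> R) : Prop :=
  forall B : I -> set R, (forall i, measurable (B i)) ->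
    fine (P (\bigcap_(i in [set: I]) (X i @^-1` B i))) =
    \prod_(i : I) fine (P (X i @^-1` B i)).

(* Take intervals I0 = ]a0, b0[ and I1 = ]a1, b1[ of positive p-mass with a1 >= 2|b0|.
   Consider the event that J_x, J'_x and the weights of the sites that avoid x but lie in a
   site meeting x fall in I0, while the weights of the other sites meeting x fall in I1.
   On this event K_{n,x} >= |b0| > max (J_x, J'_x): if M is an optimal matching avoiding x,
   replacing the sites of M that meet x by x itself and by singletons on the vertices they
   leave uncovered gives a matching containing x, and the removed weight exceeds the added
   singleton weight by at least |b0| because each removed site frees at most one vertex.
   The event constrains at most 2^(4d+2) + 1 independent weights, all supported in the closed
   neighbourhood of x, so its probability is bounded below independently of n. *)

From HB Require Import structures.
From mathcomp Require Import all_boot all_order all_algebra.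
From mathcomp Require Import all_classical all_reals all_analysis.
From mathcomp Require Import zify lra measurable_realfun.
Import Order.TTheory GRing.Theory Num.Theory.
Import numFieldNormedType.Exports.
Local Open Scope classical_set_scope.
Local Open Scope ring_scope.
Set Implicit Arguments. Unset Strict Implicit. Unset Printing Implicit Defensive.

Lemma leq_card_bigcup (I T : finType) (A : {pred I}) (F : I -> {set T}) :
  (#|(\bigcup_(i in A) F i)%SET| <= \sum_(i in A) #|F i|)%N.
Proof.
apply: (big_ind2 (fun (S : {set T}) m => #|S| <= m)%N) => [|S1 m1 S2 m2 h1 h2|//].
  by rewrite cards0.
exact: leq_trans (leq_card_setU S1 S2) (leq_add h1 h2).
Qed.

Section Sites.
Local Close Scope classical_set_scope.
Variables (n d : nat).
Local Notation vtx := (vtx n d).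
Local Notation Sigma := (Sigma n d).

Lemma site_or_edge1 (z : vtx) : site_or_edge [set z].
Proof. by rewrite /site_or_edge cards1. Qed.

Definition site (z : vtx) : Sigma := exist _ [set z] (site_or_edge1 z).

Lemma val_site (z : vtx) : val (site z) = [set z].
Proof. by []. Qed.

Lemma site_inj : injective site.
Proof. by move=> a b /(congr1 val) /set1_inj. Qed.

Lemma card_Sigma (y : Sigma) : (0 < #|val y| <= 2)%N.
Proof.
case: y => A /= /orP [/eqP -> //|/existsP [u /existsP [v /andP [/eqP -> _]]]].
by rewrite cards2; case: (u != v).
Qed.

Lemma adjb_sym (u v : vtx) : adjb u v = adjb v u.
Proof.
rewrite /adjb; apply/existsP/existsP => -[i /andP [h1 /forallP h2]]; exists i;
  rewrite orbC h1 /=; apply/forallP => j; by case: (j != i) (h2 j) => //= /eqP ->.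
Qed.

Definition step (v : vtx) (i : 'I_d) (up : bool) : vtx :=
  [ffun j => if j == i then (if up then ordS (v j) else ord_pred (v j)) else v j].

Lemma adjb_step (v w : vtx) : adjb v w -> exists i up, w = step v i up.
Proof.
case/existsP => i /andP [hi /forallP hj]; exists i.
have off j : j != i -> w j = v j by move=> ji; move: (hj j); rewrite ji => /eqP.
case/orP: hi => /eqP hi.
- exists true; apply/ffunP => j; rewrite ffunE.
  by case: eqP => [->|/eqP ji]; [apply: val_inj|exact: off].
- exists false; apply/ffunP => j; rewrite ffunE.
  case: eqP => [->|/eqP ji]; last exact: off.
  have -> : v i = ordS (w i) by apply: val_inj.
  by rewrite ordSK.
Qed.

Lemma card_adjb (v : vtx) : (#|[set w | adjb v w]| <= 2 * d)%N.
Proof.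
have -> : (2 * d = #|[set: 'I_d * bool]|)%N.
  by rewrite cardsT card_prod card_ord card_bool mulnC.
apply: leq_trans (leq_imset_card (fun ib => step v ib.1 ib.2) _).
apply: subset_leq_card; apply/fintype.subsetP => w; rewrite inE => /adjb_step [i [up ->]].
by apply/imsetP; exists (i, up).
Qed.

Lemma adjb_step_up (v : vtx) (i : 'I_d) : adjb v (step v i true).
Proof.
apply/existsP; exists i; rewrite ffunE eqxx eqxx /=.
by apply/forallP => j; rewrite ffunE; case: eqP => //= _; rewrite eqxx implybT.
Qed.

Lemma step_up_neq (v : vtx) (i : 'I_d) : (1 < n)%N -> step v i true != v.
Proof.
move=> n_gt1; apply/eqP => /(congr1 (fun f : vtx => val (f i))); rewrite ffunE eqxx /=.
have := ltn_ord (v i); set k := val (v i) => k_lt.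
have [k1_lt|k1_ge] := ltnP k.+1 n; first by rewrite modn_small //; lia.
have -> : k.+1 = n by lia.
by rewrite modnn; lia.
Qed.

Lemma site_or_edge_step (v : vtx) (i : 'I_d) : site_or_edge [set v; step v i true].
Proof.
apply/orP; right; apply/existsP; exists v; apply/existsP; exists (step v i true).
by rewrite eqxx adjb_step_up.
Qed.

Definition edge (v : vtx) (i : 'I_d) : Sigma :=
  exist (fun A => is_true (site_or_edge A)) _ (site_or_edge_step v i).

Lemma matching_cover (M : {set Sigma}) : is_matching M ->
  forall z, exists y0, [/\ y0 \in M, z \in val y0 &
    forall y, y \in M -> z \in val y -> y = y0].
Proof.
move=> /forallP hM z; have /cards1P [y0 hy0] := hM z.
have : y0 \in [set y in M | z \in val y] by rewrite hy0 set11.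
rewrite inE => /andP [y0M zy0]; exists y0; split => // y yM zy.
have : y \in [set y in M | z \in val y] by rewrite inE yM.
by rewrite hy0 inE => /eqP.
Qed.

Definition solo_matching (e : Sigma) : {set Sigma} := e |: [set site z | z in ~: val e].

Lemma is_matching_solo (e : Sigma) : is_matching (solo_matching e).
Proof.
apply/forallP => z; apply/cards1P.
have [ze|ze] := boolP (z \in val e).
  exists e; apply/setP => y; rewrite !inE.
  apply/idP/idP => [/andP [/orP [//|/imsetP [u]]]|/eqP ->]; last by rewrite eqxx ze.
  by rewrite inE => ue ->; rewrite val_site inE => /eqP ez; move: ue; rewrite -ez ze.
exists (site z); apply/setP => y; rewrite !inE.
apply/idP/idP => [/andP [/orP [/eqP ->|/imsetP [u]]]|/eqP ->].
- by rewrite (negbTE ze).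
- by rewrite inE => ue ->; rewrite val_site inE => /eqP ->.
- rewrite val_site set11 andbT; apply/orP; right; apply/imsetP; exists z => //.
  by rewrite inE.
Qed.

Lemma exists_matching_notin (x : Sigma) : (1 < n)%N -> (0 < d)%N ->
  exists M, is_matching M && (x \notin M).
Proof.
move=> n_gt1 d_gt0; have [/cards1P [v xv]|x_not1] := boolP (#|val x| == 1%N).
  exists (solo_matching (edge v (Ordinal d_gt0))).
  rewrite is_matching_solo !inE; apply/negP => /orP [/eqP ex|/imsetP [z]].
    move/(congr1 (fun y : Sigma => #|val y|)): ex; rewrite xv cards1 /= cards2.
    by rewrite eq_sym step_up_neq.
  rewrite inE => zv ex; move: zv; have : val x = val (site z) by rewrite ex.
  by rewrite xv val_site => /set1_inj <-; rewrite !inE eqxx.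
have /andP [/card_gt0P [a _] _] := card_Sigma x.
exists (solo_matching (site a)); rewrite is_matching_solo !inE.
by apply/negP => /orP [/eqP ex|/imsetP [z _ ex]]; move: x_not1; rewrite ex val_site cards1.
Qed.

Section Reroute.
Variable x : Sigma.

Definition meets (y : Sigma) : bool := ~~ [disjoint val y & val x].

Lemma meetsP (y : Sigma) : reflect (exists2 z, z \in val y & z \in val x) (meets y).
Proof.
rewrite /meets -setI_eq0; apply: (iffP (set0Pn _)) => [[z]|[z zy zx]].
  by rewrite inE => /andP []; exists z.
by exists z; rewrite inE zy.
Qed.

Lemma meets_refl : meets x.
Proof. by have /andP [/card_gt0P [z xz] _] := card_Sigma x; apply/meetsP; exists z. Qed.

Definition fringe (y : Sigma) : bool :=
  [&& y != x, ~~ meets y & [exists s, [&& s != x, meets s & val y \subset val s]]].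

Definition meeting (M : {set Sigma}) : {set Sigma} := [set y in M | meets y].

Definition freed (M : {set Sigma}) : {set vtx} :=
  (\bigcup_(s in meeting M) val s) :\: val x.

Definition reroute (M : {set Sigma}) : {set Sigma} :=
  (M :\: meeting M) :|: (x |: [set site z | z in freed M]).

Lemma in_reroute (M : {set Sigma}) (y : Sigma) : (y \in reroute M) =
  [|| (y \in M) && ~~ meets y, y == x | [exists z, (z \in freed M) && (y == site z)]].
Proof.
rewrite !inE; congr (_ || (_ || _)); first by case: (y \in M); rewrite ?andbF ?andbT.
apply/imsetP/existsP => [[z zF ->]|[z /andP [zF /eqP ->]]]; exists z => //.
by rewrite zF eqxx.
Qed.

Lemma reroute_x (M : {set Sigma}) : x \in reroute M.
Proof. by rewrite in_reroute eqxx orbT. Qed.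

Lemma in_freed (M : {set Sigma}) (z : vtx) : (z \in freed M) =
  (z \notin val x) && [exists s, [&& s \in M, meets s & z \in val s]].
Proof.
rewrite !inE; congr (_ && _); apply/bigcupP/existsP => [[s]|[s /and3P [sM ms zs]]].
  by rewrite inE => /andP [sM ms] zs; exists s; rewrite sM ms zs.
by exists s; rewrite // inE sM ms.
Qed.

Lemma reroute_matching (M : {set Sigma}) :
  is_matching M -> x \notin M -> is_matching (reroute M).
Proof.
move=> mM xM; apply/forallP => z; apply/cards1P.
have [y0 [y0M zy0 y0_uniq]] := matching_cover mM z.
have [zx|zx] := boolP (z \in val x).
  exists x; apply/setP => y; rewrite finset.in_set in_reroute inE.
  apply/idP/idP => [|/eqP ->]; last by rewrite eqxx zx orbT.
  case/andP => /or3P [/andP [_ /meetsP my]|//|/existsP [u /andP [uF /eqP ->]]] zy.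
    by case: my; exists z.
  by move: zy uF; rewrite val_site inE in_freed => /eqP <-; rewrite zx.
have [zF|zF] := boolP (z \in freed M).
  exists (site z); apply/setP => y; rewrite finset.in_set in_reroute inE.
  apply/idP/idP => [|/eqP ->]; last first.
    rewrite val_site set11 andbT; apply/or3P; apply: Or33.
    by apply/existsP; exists z; rewrite zF eqxx.
  case/andP => /or3P [/andP [yM /meetsP my]|/eqP ->|/existsP [u /andP [_ /eqP ->]]] zy.
  - move: zF; rewrite in_freed => /andP [_ /existsP [s /and3P [sM /meetsP ms zs]]].
    by case: my; rewrite (y0_uniq _ yM zy) -(y0_uniq _ sM zs).
  - by rewrite zy in zx.
  - by move: zy; rewrite val_site inE => /eqP ->.
exists y0; apply/setP => y; rewrite finset.in_set in_reroute inE.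
apply/idP/idP => [|/eqP ->]; last first.
  rewrite zy0 andbT y0M /=; apply/orP; left; apply: contra zF => my0.
  by rewrite in_freed zx; apply/existsP; exists y0; rewrite y0M my0.
case/andP => /or3P [/andP [yM _]|/eqP ->|/existsP [u /andP [uF /eqP ->]]] zy.
- by rewrite (y0_uniq _ yM zy).
- by rewrite zy in zx.
- by move: zy uF; rewrite val_site inE => /eqP <-; rewrite (negbTE zF).
Qed.

Lemma freed_fringe (M : {set Sigma}) (z : vtx) :
  x \notin M -> z \in freed M -> fringe (site z).
Proof.
move=> xM; rewrite in_freed => /andP [zx /existsP [s /and3P [sM ms zs]]].
have nm : ~~ meets (site z).
  by apply/meetsP => -[v]; rewrite val_site inE => /eqP ->; rewrite (negbTE zx).
apply/and3P; split => //; first by apply: contraNneq nm => ->; exact: meets_refl.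
apply/existsP; exists s; rewrite ms val_site finset.sub1set zs !andbT.
by apply: contraNneq xM => <-.
Qed.

Lemma card_freed (M : {set Sigma}) : (#|freed M| <= #|meeting M|)%N.
Proof.
have freed_sub : freed M \subset \bigcup_(s in meeting M) (val s :\: val x).
  apply/fintype.subsetP => z; rewrite inE => /andP [zx /bigcupP [s sM zs]].
  by apply/bigcupP; exists s; rewrite // inE zx.
apply: leq_trans (subset_leq_card freed_sub) _; apply: leq_trans (leq_card_bigcup _ _) _.
rewrite -sum1_card; apply: leq_sum => s; rewrite inE => /andP [_ /meetsP [z zs zx]].
have sx_gt0 : (0 < #|val s :&: val x|)%N by apply/card_gt0P; exists z; rewrite inE zs.
have /andP [_ s_le2] := card_Sigma s.
by rewrite cardsD leq_subLR (leq_trans s_le2) // addn1 ltnS.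
Qed.

Lemma meeting_gt0 (M : {set Sigma}) : is_matching M -> (0 < #|meeting M|)%N.
Proof.
move=> mM; have /andP [/card_gt0P [z zx] _] := card_Sigma x.
have [y0 [y0M zy0 _]] := matching_cover mM z.
by apply/card_gt0P; exists y0; rewrite inE y0M; apply/meetsP; exists z.
Qed.

Lemma reroute_disjoint (M : {set Sigma}) : is_matching M ->
  [disjoint M :\: meeting M & x |: [set site z | z in freed M]].
Proof.
move=> mM; rewrite -setI_eq0; apply/eqP/setP => y; rewrite !inE.
apply/negbTE/negP => /andP [/andP [my yM] /orP [/eqP yx|/imsetP [z zF yz]]].
  by move: my; rewrite yM /= yx meets_refl.
move: zF; rewrite in_freed => /andP [_ /existsP [s /and3P [sM ms zs]]].
have [y0 [_ _ y0_uniq]] := matching_cover mM z.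
have zy : z \in val y by rewrite yz val_site set11.
by move: my; rewrite yM (y0_uniq _ yM zy) -(y0_uniq _ sM zs) ms.
Qed.

Lemma x_notin_sites (M : {set Sigma}) : x \notin [set site z | z in freed M].
Proof.
apply/imsetP => -[z]; rewrite in_freed => /andP [zx _] xz.
by move: zx; rewrite xz val_site set11.
Qed.

Definition touching (y : Sigma) : bool := meets y || fringe y.

Definition nbhd : {set vtx} := val x :|: \bigcup_(a in val x) [set v | adjb a v].

Lemma meets_sub (y : Sigma) : meets y -> val y \subset nbhd.
Proof.
move=> /meetsP [a ay ax]; apply/fintype.subsetP => z zy.
rewrite !inE; have [//|zx] := boolP (z \in val x).
apply/bigcupP; exists a => //; rewrite inE.
move: ay zy; case: y => A /= /orP [/cards1P [b ->]|/existsP [u /existsP [v /andP [/eqP -> uv]]]].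
  by rewrite !inE => /eqP ea /eqP ez; move: zx; rewrite ez -ea ax.
rewrite !inE => /orP [] /eqP ea /orP [] /eqP ez.
- by move: zx; rewrite ez -ea ax.
- by rewrite ea ez.
- by rewrite ea ez adjb_sym.
- by move: zx; rewrite ez -ea ax.
Qed.

Lemma touching_sub (y : Sigma) : touching y -> val y \subset nbhd.
Proof.
case/orP => [/meets_sub //|/and3P [_ _ /existsP [s /and3P [_ ms ys]]]].
exact: fintype.subset_trans ys (meets_sub ms).
Qed.

(* [nbhd] has at most [2 + 2 * 2d] vertices and every touching site is one of its subsets. *)
Lemma card_touching : (#|[set y | touching y]| <= 2 ^ (4 * d + 2))%N.
Proof.
rewrite -(card_imset _ val_inj); apply: (@leq_trans #|powerset nbhd|).
  apply: subset_leq_card; apply/fintype.subsetP => A /imsetP [y].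
  by rewrite inE powersetE => /touching_sub ys ->.
rewrite card_powerset leq_pexp2l //; apply: leq_trans (leq_card_setU _ _) _.
have /andP [_ x_le2] := card_Sigma x.
apply: (@leq_trans (2 + 2 * (2 * d))); last by lia.
apply: leq_add => //; apply: leq_trans (leq_card_bigcup _ _) _.
apply: (@leq_trans (\sum_(a in val x) 2 * d)%N); first by apply: leq_sum => a _; exact: card_adjb.
by rewrite sum_nat_const leq_mul2r x_le2 orbT.
Qed.

Section Weights.
Variables (R : realType) (w : Sigma -> R).

Lemma Hw_reroute (M : {set Sigma}) : is_matching M ->
  Hw w (reroute M) =
  Hw w M - \sum_(y in meeting M) w y + w x + \sum_(z in freed M) w (site z).
Proof.
move=> mM; rewrite /Hw /reroute; under eq_bigl do rewrite finset.in_setU.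
rewrite bigU /=; last exact: reroute_disjoint.
rewrite big_setU1 ?x_notin_sites //= big_imset /=; last by move=> a b _ _; exact: site_inj.
have meeting_sub : meeting M \subset M by apply/fintype.subsetP => y; rewrite inE => /andP [].
rewrite (big_setID (meeting M) (A := M)) /= (finset.setIidPr meeting_sub).
lra.
Qed.

Lemma reroute_gain (M : {set Sigma}) (a c : R) : is_matching M -> x \notin M ->
  (forall y, y != x -> meets y -> a <= w y) ->
  (forall y, fringe y -> w y <= c) -> 0 <= c -> 2 * c <= a ->
  c <= \sum_(y in meeting M) w y - \sum_(z in freed M) w (site z).
Proof.
move=> mM xM meets_ge fringe_le c_ge0 ca.
have meeting_ge : a * #|meeting M|%:R <= \sum_(y in meeting M) w y.
  rewrite mulr_natr -sumr_const; apply: ler_sum => y; rewrite inE => /andP [yM my].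
  by apply: meets_ge => //; apply: contraNneq xM => <-.
have freed_le : \sum_(z in freed M) w (site z) <= c * #|freed M|%:R.
  rewrite mulr_natr -sumr_const; apply: ler_sum => z zF.
  exact/fringe_le/(freed_fringe xM zF).
have card_le : #|freed M|%:R <= #|meeting M|%:R :> R by rewrite ler_nat card_freed.
have card_ge1 : 1 <= #|meeting M|%:R :> R by rewrite ler1n meeting_gt0.
have := ler_wpM2l c_ge0 card_le.
have : (a - c) * 1 <= (a - c) * #|meeting M|%:R by apply: ler_wpM2l => //; lra.
rewrite mulr1 mulrBl; lra.
Qed.

Lemma minH_attained (b : bool) : (exists M, is_matching M && ((x \in M) == b)) ->
  exists M, [/\ is_matching M, (x \in M) = b, minH x b w = Hw w M &
    forall M', is_matching M' -> (x \in M') = b -> Hw w M <= Hw w M'].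
Proof.
move=> [M0 hM0].
have [M hM eM] := eq_bigmin M0 (fun M => is_matching M && ((x \in M) == b))
  (fun M => (Hw w M)%:E) hM0 (fun _ _ => leey _).
move: hM; rewrite unfold_in => /andP [mM /eqP xM].
exists M; split => //; first by rewrite /minH eM.
move=> M' mM' xM'; rewrite -lee_fin -eM.
by apply: (bigmin_le_cond _ (fun M => (Hw w M)%:E)); rewrite /= mM' xM' eqxx.
Qed.

Lemma Ktrans_ge (a c : R) : (exists M, is_matching M && (x \notin M)) ->
  (forall y, y != x -> meets y -> a <= w y) ->
  (forall y, fringe y -> w y <= c) -> 0 <= c -> 2 * c <= a ->
  c <= Ktrans x w.
Proof.
move=> [M0 /andP [mM0 xM0]] meets_ge fringe_le c_ge0 ca.
have /minH_attained [M [mM /negbT xM minH0 _]] :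
    exists M, is_matching M && ((x \in M) == false).
  by exists M0; rewrite mM0 eqbF_neg.
have /minH_attained [M' [_ _ minH1 M'_min]] :
    exists M', is_matching M' && ((x \in M') == true).
  by exists (reroute M); rewrite reroute_matching // reroute_x.
have := M'_min _ (reroute_matching mM xM) (reroute_x M).
rewrite Hw_reroute //; have := reroute_gain mM xM meets_ge fringe_le c_ge0 ca.
rewrite /Ktrans minH0 minH1; lra.
Qed.

End Weights.

End Reroute.

End Sites.

Section Constraints.
Variables (n d : nat) (x : Sigma n d) (R : realType) (a0 b0 a1 b1 : R).

Definition constrained (i : option (Sigma n d)) : bool :=
  if i is Some y then touching x y else true.

Definition site_constraint (i : option (Sigma n d)) : set R :=
  match i with
  | None => [set` `]a0, b0[]
  | Some y => if y == x then [set` `]a0, b0[] else if meets x y then [set` `]a1, b1[]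
              else if fringe x y then [set` `]a0, b0[] else setT
  end.

Lemma site_constraint_free (i : option (Sigma n d)) :
  ~~ constrained i -> site_constraint i = setT.
Proof.
case: i => [y|] //= /norP [my fy]; rewrite (negbTE my) (negbTE fy).
by case: eqP => // yx; move: my; rewrite yx meets_refl.
Qed.

Lemma site_constraint_itv (i : option (Sigma n d)) : constrained i ->
  site_constraint i = [set` `]a0, b0[] \/ site_constraint i = [set` `]a1, b1[].
Proof.
case: i => [y|_]; last by left.
rewrite /= /touching; case: (y == x); first by left.
case: (meets x y); first by right.
by case: (fringe x y) => //= _; left.
Qed.

Lemma measurable_site_constraint (i : option (Sigma n d)) :
  measurable (site_constraint i).
Proof.
have [/site_constraint_itv [] -> | /site_constraint_free ->] := boolP (constrained i) => //;
  exact: measurable_itv.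
Qed.

Lemma card_constrained : (#|[set i | constrained i]%SET| <= (2 ^ (4 * d + 2)).+1)%N.
Proof.
have -> : [set i | constrained i]%SET =
    (None |: [set Some y | y in [set y | touching x y]])%SET.
  apply/setP => -[y|]; rewrite !inE //=.
  by apply/idP/imsetP => [ty|[z + [->]]]; [exists y; rewrite ?inE|rewrite inE].
rewrite cardsU1 card_imset; last by move=> u v [].
by rewrite -add1n leq_add ?leq_b1 ?card_touching.
Qed.

Lemma max_lt_Ktrans (w : Sigma n d -> R) (w' : R) :
  (1 < n)%N -> (0 < d)%N -> 2 * `|b0| <= a1 ->
  (forall y, site_constraint (Some y) (w y)) -> site_constraint None w' ->
  Num.max (w x) w' < Ktrans x w.
Proof.
move=> n_gt1 d_gt0 a1_ge w_in w'_in.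
have /andP [_ wx_lt] : a0 < w x < b0 by have := w_in x; rewrite /site_constraint eqxx set_itvoo.
have /andP [_ w'_lt] : a0 < w' < b0 by move: w'_in; rewrite /site_constraint set_itvoo.
have meets_ge y : y != x -> meets x y -> a1 <= w y.
  move=> yx my; have := w_in y.
  by rewrite /site_constraint (negbTE yx) my set_itvoo => /andP [/ltW].
have fringe_le y : fringe x y -> w y <= `|b0|.
  move=> fy; have /and3P [yx my _] := fy.
  have := w_in y; rewrite /site_constraint (negbTE yx) (negbTE my) fy set_itvoo.
  move=> /andP [_ /ltW wy_le].
  exact: le_trans wy_le (ler_norm b0).
have := Ktrans_ge (exists_matching_notin x n_gt1 d_gt0) meets_ge fringe_le (normr_ge0 b0) a1_ge.
by rewrite gt_max; have := ler_norm b0; move=> *; apply/andP; split; lra.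
Qed.

End Constraints.

Section Analysis.
Variable R : realType.
Local Notation mu := (@lebesgue_measure R).

Lemma itv_integral_ge (p : R -> R) (a b : R) : a < b ->
  {within `]a, b[, continuous p} -> (forall t, a < t < b -> 0 < p t) ->
  exists c e eps : R, [/\ a < c, c < e, 0 < eps &
    (eps%:E <= \int[mu]_(t in `]c, e[) (p t)%:E)%E].
Proof.
move=> ab p_cont p_pos; pose m := (a + b) / 2.
have m_in : m \in [set` `]a, b[] by rewrite inE /= in_itv /= /m; apply/andP; split; lra.
have pm_gt0 : 0 < p m by apply: p_pos; move: m_in; rewrite inE /= in_itv.
have cont_m : {for m, continuous p}.
  by move: p_cont; rewrite continuous_open_subspace; [exact|exact: interval_open].
have [r r_gt0 r_ball] : exists2 r : R, 0 < r & forall t, ball m r t -> p m / 2 < p t.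
  have half_lt : p m / 2 < p m by lra.
  have near_m : \forall t \near m, p m / 2 < p t.
    exact: (@cvgr_gt R R (nbhs m) _ p (p m) cont_m _ half_lt).
  by have [/(_ near_m) [r r_gt0 hr] _] := nbhs_ballP m [set t | p m / 2 < p t]; exists r.
pose e := Num.min r ((b - a) / 2).
have e_gt0 : 0 < e by rewrite lt_min r_gt0 /=; lra.
have e_le_r : e <= r by rewrite ge_min lexx.
have e_le : e <= (b - a) / 2 by rewrite ge_min lexx orbT.
exists m, (m + e), (p m / 2 * e); split; [rewrite /m; lra|lra|apply: mulr_gt0 => //; lra|].
have sub : [set` `]m, m + e[] `<=` [set` `]a, b[].
  by move=> t; rewrite /= !in_itv /= /m => /andP [? ?]; apply/andP; split; lra.
have p_meas : measurable_fun `]m, m + e[ p.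
  by apply: subspace_continuous_measurable_fun => //; exact: continuous_subspaceW sub p_cont.
have -> : (p m / 2 * e)%:E = (\int[mu]_(t in `]m, (m + e)%R[) cst (p m / 2)%:E t)%E.
  rewrite integral_cst //= lebesgue_measure_itv /= lte_fin ltrDl e_gt0 /=.
  by rewrite -EFinD -EFinM addrAC subrr add0r.
apply: ge0_le_integral => //; first by move=> t _; rewrite lee_fin; lra.
  exact/measurable_EFinP.
move=> t; rewrite /= in_itv /= => /andP [mt te]; rewrite lee_fin.
apply/ltW/r_ball; rewrite -ball_normE /ball_ /= ler0_norm; lra.
Qed.

Lemma density_itv_ge (beta : \bar R) (alpha : R) (p : R -> R) :
  good_density beta alpha p -> forall L : R, exists a b eps : R,
  [/\ L <= a, a < b, 0 < eps & (eps%:E <= \int[mu]_(t in `]a, b[) (p t)%:E)%E].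
Proof.
case=> beta_fin [_ [_ [p_pos [p_cont _]]]] L.
have [x0 [Lx0 bx0]] : exists x0, L < x0 /\ (beta < x0%:E)%E.
  case: beta beta_fin {p_pos p_cont} => [r| |] //= _; last by exists (L + 1); rewrite ltrDl ltNye.
  have L_le : L <= Num.max L r by rewrite le_max lexx.
  have r_le : r <= Num.max L r by rewrite le_max lexx orbT.
  by exists (Num.max L r + 1); rewrite lte_fin; split; lra.
have sub : [set` `]x0, x0 + 1[] `<=` [set t : R | (beta < t%:E)%E].
  by move=> t; rewrite /= in_itv /= => /andP [x0t _]; apply: lt_trans bx0 _; rewrite lte_fin.
have x0_lt : x0 < x0 + 1 by rewrite ltrDl.
have [a [b [eps [x0a ab eps_gt0 h]]]] := itv_integral_ge x0_lt
  (continuous_subspaceW sub p_cont) (fun t tI => p_pos t (sub t tI)).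
by exists a, b, eps; split => //; apply/ltW/(lt_trans Lx0).
Qed.

Lemma density_itv_prob_ge (dT : measure_display) (T : measurableType dT)
    (P : probability T R) (Y : T -> R) (p : R -> R) (a b q e : R) :
  has_density P Y p -> q <= e -> (e%:E <= \int[mu]_(t in `]a, b[) (p t)%:E)%E ->
  (q%:E <= P (Y @^-1` `]a, b[))%E.
Proof. by move=> hY qe he; rewrite hY; [exact: le_trans he|exact: measurable_itv]. Qed.

Lemma measurable_bigmin (dT : measure_display) (T : measurableType dT) (D : set T)
    (I : Type) (r : seq I) (P : pred I) (F : I -> T -> \bar R) :
  (forall i, measurable_fun D (F i)) ->
  measurable_fun D (fun t => \big[Order.min/+oo%E]_(i <- r | P i) F i t).
Proof.
move=> mF; elim: r => [|i r IH].
  by under eq_fun do rewrite big_nil; exact: measurable_cst.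
under eq_fun do rewrite big_cons.
by case: (P i) => //; exact: measurable_mine.
Qed.

Lemma measurable_Ktrans (dT : measure_display) (T : measurableType dT) (n d : nat)
    (x : Sigma n d) (J : Sigma n d -> T -> R) :
  (forall y, measurable_fun setT (J y)) -> measurable_fun setT (fun t => Ktrans x (J ^~ t)).
Proof.
move=> mJ; apply: measurable_funD; last exact: mJ.
have mHw M : measurable_fun setT (fun t => Hw (J ^~ t) M).
  by rewrite /Hw; under eq_fun do rewrite -big_enum; exact: measurable_sum.
by apply: measurable_funB; rewrite /minH; (apply: measurableT_comp; first exact: fine_measurable);
  apply: measurable_bigmin => M; exact/measurable_EFinP.
Qed.

Lemma independent_event_ge (dT : measure_display) (T : measurableType dT)
    (P : probability T R) (I : finType) (X : I -> T -> R) (B : I -> set R)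
    (c : pred I) (q : R) (k : nat) (A : set T) :
  mutually_independent P X -> (forall i, measurable_fun setT (X i)) ->
  (forall i, measurable (B i)) -> 0 <= q <= 1 ->
  (forall i, c i -> (q%:E <= P (X i @^-1` B i))%E) -> (forall i, ~~ c i -> B i = setT) ->
  (#|[set i | c i]%SET| <= k)%N ->
  measurable A -> \bigcap_(i in setT) X i @^-1` B i `<=` A -> ((q ^+ k)%:E <= P A)%E.
Proof.
move=> indep mX mB /andP [q_ge0 q_le1] c_ge c_free card_le mA box_sub.
have mXB i : measurable (X i @^-1` B i) by rewrite -[X in measurable X]setTI; exact: mX.
have mbox : measurable (\bigcap_(i in setT) X i @^-1` B i).
  by apply: fin_bigcap_measurable => [|i _]; [exact: finite_finset|exact: mXB].
apply: le_trans (le_measure _ (mem_set mbox) (mem_set mA) box_sub).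
rewrite -(fineK (fin_num_measure P _ mbox)) lee_fin indep //.
rewrite (bigID c) /= [X in _ * X]big1 ?mulr1; last first.
  by move=> i /c_free ->; rewrite preimage_setT probability_setT.
apply: (@le_trans _ _ (\prod_(i | c i) q)).
  by rewrite prodr_const -cardsE ler_wiXn2l.
apply: ler_prod => i ci; rewrite q_ge0 -lee_fin fineK ?c_ge //.
exact: fin_num_measure.
Qed.

End Analysis.

Unset Implicit Arguments.
Set Strict Implicit.

Theorem lemma6p2 (R : realType) (d : nat) (beta : \bar R) (alpha delta : R) (p : R -> R) :
  (2 <= d)%N -> good_density beta alpha p -> 0 < delta ->
  exists c1 : R, 0 < c1 /\
    forall (n : nat), (3 <= n)%N ->
    forall (x : Sigma n d) (dT : measure_display) (T : measurableType dT)
      (P : probability T R) (J : Sigma n d -> {RV P >-> R}) (J' : {RV P >-> R}),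
      (forall y, has_density P (J y) p) ->
      has_density P J' p ->
      mutually_independent P (fun i : option (Sigma n d) =>
         match i with Some y => (J y : T -> R) | None => (J' : T -> R) end) ->
      (forall y, ('E_P[fun w => (`|J y w| `^ (4 + delta))%R] < +oo)%E) ->
      (c1%:E < P [set w | (Num.max (J x w) (J' w) < Ktrans x (fun y => J y w))%R])%E.
Proof.
move=> d_ge2 good _.
have [a0 [b0 [e0 [_ ab0 e0_gt0 he0]]]] := density_itv_ge good 0.
have [a1 [b1 [e1 [a1_ge ab1 e1_gt0 he1]]]] := density_itv_ge good (2 * `|b0|).
pose q := Num.min (Num.min e0 e1) 1; pose k := (2 ^ (4 * d + 2)).+1.
have q_gt0 : 0 < q by rewrite !lt_min e0_gt0 e1_gt0 ltr01.
have [qe0 qe1 q_le1] : [/\ q <= e0, q <= e1 & q <= 1] by rewrite !ge_min !lexx !orbT.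
exists (q ^+ k / 2); split; first by rewrite divr_gt0 // exprn_gt0.
move=> n n_ge3 x dT T P J J' hJ hJ' indep _.
have mJ y : measurable_fun setT (J y) by exact: measurable_funPT.
apply: (@lt_le_trans _ _ (q ^+ k)%:E).
  by rewrite lte_fin ltr_pdivrMr // ltr_pMr ?exprn_gt0 // ltr1n.
apply: (independent_event_ge (c := constrained x) (B := site_constraint x a0 b0 a1 b1) indep).
- by case=> [y|]; [exact: mJ|exact: measurable_funPT].
- exact: measurable_site_constraint.
- by rewrite (ltW q_gt0).
- case=> [y|] /(@site_constraint_itv _ _ x R a0 b0 a1 b1) [] ->;
    by [exact: density_itv_prob_ge (hJ _) qe0 he0|exact: density_itv_prob_ge (hJ _) qe1 he1
       |exact: density_itv_prob_ge hJ' qe0 he0|exact: density_itv_prob_ge hJ' qe1 he1].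
- exact: site_constraint_free.
- exact: card_constrained.
- have mmax := measurable_maxr (mJ x) (measurable_funPT J').
  have := measurable_fun_ltr mmax (measurable_Ktrans x mJ).
  by move/(_ measurableT [set true] I); rewrite setTI.
- move=> t box; apply: max_lt_Ktrans (fun y => box (Some y) I) (box None I) => //.
  + exact: leq_trans n_ge3.
  + exact: leq_trans d_ge2.
Qed.
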